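(* For a finite set $A \subset \mathbb{R}$ define the set of popular differences \[ P = \left\{ x \in A-A : \delta_A(x) \geq \frac{1}{11}\frac{|A|^2}{|A-A|} \right\}. \] Then \[ |A|^6 \ll E_3(A) \cdot \sum_{x\in P} \delta_P(x). \]
   Context: For finite $X, Y\subset\mathbb{R}$, $\delta_{X,Y}(x) = \#\{(u,v)\in X\times Y : x = u - v\}$ and $\delta_X = \delta_{X,X}$. $E_3(A) = \sum_{x} \delta_A(x)^3$. The notation $F \ll G$ means $F = O(G)$ as $|A| \to \infty$, i.e. $F \le C G$ for an absolute constant $C$ (for all sufficiently large $|A|$). *)

From HB Require Import structures.
From mathcomp Require Import all_boot all_order all_algebra.
From mathcomp Require Import finmap.
From mathcomp Require Import Rstruct.
From Stdlib Require Rdefinitions.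
Notation R := Rdefinitions.R (only parsing).
Set Implicit Arguments. Unset Strict Implicit. Unset Printing Implicit Defensive.
Import Order.TTheory GRing.Theory Num.Theory.
Local Open Scope ring_scope.
Local Open Scope fset_scope.

Definition delta (X Y : {fset R}) (x : R) : nat :=
  (\sum_(u <- X) \sum_(v <- Y) (x == (u - v)%R))%N.

Definition deltaA (X : {fset R}) (x : R) : nat := delta X X x.

Definition diffset (A : {fset R}) : {fset R} := [fset u - v | u in A, v in A].

(* E_3(A) = sum_x delta_A(x)^3 (delta_A vanishes outside A - A) *)
Definition E3 (A : {fset R}) : nat :=
  (\sum_(x <- diffset A) expn (deltaA A x) 3)%N.

Definition popular (A : {fset R}) : {fset R} :=
  [fset x in diffset A |
     (1 / 11) * ((#|` A|%:R : R) ^+ 2 / (#|` diffset A|%:R : R))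
       <= (deltaA A x)%:R].

(* Call (a, b, c) in A^3 a popular triple when a - b, b - c and a - c all lie in P.
   Unpopular differences have multiplicity below |A|^2 / (11 |A - A|), so at most
   |A|^2 / 11 pairs of A have one; by the union bound at least (8/11) |A|^3 triples are
   popular.  The map (a, b, c) |-> (a - c, b - c) sends popular triples to pairs
   (p, q) in P x P with p - q in P, of which there are sum_{x in P} delta_P(x).  Two
   triples have the same image exactly when they differ by a common shift t, so
   collisions number at most sum_t delta_A(t)^3 = E_3(A).  Cauchy-Schwarz over the
   fibres of the map gives (8/11)^2 |A|^6 <= E_3(A) sum_{x in P} delta_P(x). *)

From HB Require Import structures.
From mathcomp Require Import all_boot all_order all_algebra.
From mathcomp Require Import finmap.
From mathcomp Require Import Rstruct.
From Stdlib Require Rdefinitions.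
From mathcomp Require Import zify ring lra.
Set Implicit Arguments. Unset Strict Implicit. Unset Printing Implicit Defensive.
Import Order.TTheory GRing.Theory Num.Theory.
Local Open Scope fset_scope.

Section NatSums.
Variable T : eqType.
Implicit Types (r : seq T) (F : T -> nat).

Lemma leq_bigsum_seq r F x : x \in r -> F x <= \sum_(y <- r) F y.
Proof. by move=> xr; rewrite (big_rem x xr) leq_addr. Qed.

Lemma sum_eqb_mul_uniq r F x :
  uniq r -> \sum_(y <- r) (y == x) * F y = (x \in r) * F x.
Proof.
move=> ur; have [xr|xNr] := boolP (x \in r).
  rewrite (bigD1_seq x xr ur) /= eqxx mul1n big1 ?addn0 // => y /negbTE->.
  by rewrite mul0n.
rewrite big_seq big1 // => y yr; case: eqP yr xNr => [-> ->|] //.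
Qed.

Lemma sum_eqb_uniq r x : uniq r -> \sum_(y <- r) (y == x) = (x \in r : nat).
Proof.
move=> ur; rewrite -[RHS]muln1 -(sum_eqb_mul_uniq (fun=> 1%N)) //.
by apply: eq_bigr => y _; rewrite muln1.
Qed.

Lemma sum_nat_const_seq r k : \sum_(y <- r) k = size r * k.
Proof. by rewrite big_const_seq count_predT iter_addn_0 mulnC. Qed.

Lemma sqr_sum_leq_size_mul_sum_sqr r F :
  (\sum_(y <- r) F y) ^ 2 <= size r * \sum_(y <- r) F y ^ 2.
Proof.
rewrite -(leq_pmul2l (isT : 0 < 2)) expnS expn1 big_distrlr /=.
have -> : 2 * (size r * \sum_(y <- r) F y ^ 2) =
          \sum_(i <- r) \sum_(j <- r) (F i ^ 2 + F j ^ 2).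
  under [RHS]eq_bigr do rewrite big_split /= sum_nat_const_seq.
  by rewrite big_split /= -big_distrr /= sum_nat_const_seq addnn -mul2n.
rewrite big_distrr; apply: leq_sum => i _; rewrite big_distrr; apply: leq_sum => j _.
exact: leq_of_leqif (nat_Cauchy _ _).
Qed.

End NatSums.

Lemma sqr_size_leq_image_mul_collisions (T U : eqType) (X : seq T) (f : T -> U) :
  size X ^ 2 <= size (undup (map f X)) * \sum_(s <- X) \sum_(s' <- X) (f s == f s').
Proof.
set Z := undup (map f X); have uZ : uniq Z := undup_uniq _.
have fXZ s : s \in X -> f s \in Z by move=> sX; rewrite mem_undup map_f.
have -> : size X = \sum_(y <- Z) \sum_(s <- X) (y == f s).
  rewrite exchange_big -sum1_size big_seq [RHS]big_seq /=.
  by apply: eq_bigr => s sX; rewrite sum_eqb_uniq ?fXZ.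
have -> : \sum_(s <- X) \sum_(s' <- X) (f s == f s') =
          \sum_(y <- Z) (\sum_(s <- X) (y == f s)) ^ 2.
  under [RHS]eq_bigr do rewrite expnS expn1 big_distrlr /=.
  rewrite [RHS]exchange_big big_seq [RHS]big_seq /=; apply: eq_bigr => s sX.
  rewrite exchange_big /=; apply: eq_bigr => s' _.
  by rewrite sum_eqb_mul_uniq // fXZ ?mul1n.
exact: sqr_sum_leq_size_mul_sum_sqr.
Qed.

Lemma leq_sum_filter (T : Type) (Q : pred T) (r : seq T) (F : T -> nat) :
  \sum_(i <- filter Q r) F i <= \sum_(i <- r) F i.
Proof. by rewrite big_filter big_mkcond leq_sum // => i _; case: (Q i). Qed.

Definition popularity_threshold (A : {fset R}) : R :=
  ((1 / 11) * ((#|` A|%:R : R) ^+ 2 / (#|` diffset A|%:R : R)))%R.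

Lemma mem_popular (A : {fset R}) x :
  (x \in popular A) = (x \in diffset A) && (popularity_threshold A <= (deltaA A x)%:R)%R.
Proof. by rewrite !inE. Qed.

Lemma mem_diffset (A : {fset R}) a b : a \in A -> b \in A -> (a - b)%R \in diffset A.
Proof. exact: in_imfset2. Qed.

Lemma sum_delta (S X Y : {fset R}) :
  \sum_(x <- S) delta X Y x = \sum_(u <- X) \sum_(v <- Y) ((u - v)%R \in S).
Proof.
rewrite exchange_big; apply: eq_bigr => u _; rewrite exchange_big.
by apply: eq_bigr => v _; rewrite sum_eqb_uniq.
Qed.

Lemma sum_pairs_by_difference (A : {fset R}) (G : R -> nat) :
  \sum_(a <- A) \sum_(b <- A) G (a - b)%R = \sum_(x <- diffset A) G x * deltaA A x.
Proof.
transitivity (\sum_(a <- A) \sum_(b <- A) \sum_(x <- diffset A) (x == (a - b)%R) * G x).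
  rewrite big_seq [RHS]big_seq; apply: eq_bigr => a aA.
  rewrite big_seq [RHS]big_seq; apply: eq_bigr => b bA.
  by rewrite sum_eqb_mul_uniq ?fset_uniq // mem_diffset ?mul1n.
under eq_bigr do rewrite exchange_big; rewrite exchange_big.
apply: eq_bigr => x _; rewrite mulnC !big_distrl /=.
by apply: eq_bigr => a _; rewrite big_distrl.
Qed.

Definition unpopular_pairs (A : {fset R}) : nat :=
  \sum_(a <- A) \sum_(b <- A) ((a - b)%R \notin popular A).

Lemma unpopular_pairs_leq (A : {fset R}) : 11 * unpopular_pairs A <= #|` A| ^ 2.
Proof.
rewrite /unpopular_pairs (sum_pairs_by_difference A (fun x => x \notin popular A)).
have [/size0nil->|D0] := eqVneq #|` diffset A| 0; first by rewrite big_nil.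
rewrite -(ler_nat R) natrM natr_sum.
apply: (le_trans (y := 11%:R * \sum_(x <- diffset A) popularity_threshold A)%R).
  rewrite ler_wpM2l ?ler0n // big_seq [leRHS]big_seq; apply: ler_sum => x xD.
  have [xP|] := boolP (x \in popular A).
    by rewrite mul0n mulr_ge0 ?divr_ge0 ?exprn_ge0 ?ler0n ?ler01.
  by rewrite mem_popular xD /= -ltNge mul1n => /ltW.
rewrite big_const_seq count_predT iter_addr_0 /popularity_threshold.
rewrite -[(_ *+ _)%R]mulr_natr natrX le_eqVlt; apply/orP; left; apply/eqP.
by field; rewrite pnatr_eq0.
Qed.

Definition gaps (s : R * R * R) : R * R := ((s.1.1 - s.2)%R, (s.1.2 - s.2)%R).

Section Triples.
Variable A : {fset R}.
Local Notation n := #|` A|.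
Local Notation P := (popular A).

Definition triples : seq (R * R * R) :=
  [seq (ab, c) | ab <- [seq (a, b) | a <- A, b <- A], c <- A].

Lemma sum_triples (F : R * R * R -> nat) :
  \sum_(s <- triples) F s = \sum_(a <- A) \sum_(b <- A) \sum_(c <- A) F (a, b, c).
Proof. by rewrite !big_allpairs. Qed.

Lemma size_triples : size triples = n ^ 3.
Proof. by rewrite !size_allpairs !expnS expn0 muln1 mulnA. Qed.

Lemma mem_triples s : s \in triples -> [/\ s.1.1 \in A, s.1.2 \in A & s.2 \in A].
Proof. by case/allpairsP => [[_ c] [/allpairsP [[a b] [/= aA bA ->]] cA ->]]. Qed.

Lemma sum_triples_mul (h1 h2 h3 : R -> nat) :
  \sum_(s <- triples) h1 s.1.1 * h2 s.1.2 * h3 s.2 =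
  (\sum_(a <- A) h1 a) * (\sum_(b <- A) h2 b) * (\sum_(c <- A) h3 c).
Proof.
rewrite sum_triples !big_distrlr /=; apply: eq_bigr => a _.
by rewrite exchange_big; apply: eq_bigr => c _; rewrite big_distrl.
Qed.

Definition popular_triple (s : R * R * R) : bool :=
  [&& (s.1.1 - s.1.2)%R \in P, (s.1.2 - s.2)%R \in P & (s.1.1 - s.2)%R \in P].

Definition popular_triples : seq (R * R * R) := filter popular_triple triples.

Lemma size_triples_leq_popular :
  n ^ 3 <= size popular_triples + 3 * (n * unpopular_pairs A).
Proof.
have sum_ab : \sum_(s <- triples) ((s.1.1 - s.1.2)%R \notin P) = n * unpopular_pairs A.
  rewrite sum_triples /= big_distrr; apply: eq_bigr => a _.
  by rewrite big_distrr; apply: eq_bigr => b _; rewrite sum_nat_const_seq.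
have sum_bc : \sum_(s <- triples) ((s.1.2 - s.2)%R \notin P) = n * unpopular_pairs A.
  by rewrite sum_triples /= sum_nat_const_seq.
have sum_ac : \sum_(s <- triples) ((s.1.1 - s.2)%R \notin P) = n * unpopular_pairs A.
  by rewrite sum_triples /= big_distrr; apply: eq_bigr => a _; rewrite sum_nat_const_seq.
rewrite -size_triples size_filter -sumn_count sumnE big_map -sum1_size.
apply: (@leq_trans (\sum_(s <- triples) (popular_triple s + ((s.1.1 - s.1.2)%R \notin P)
    + ((s.1.2 - s.2)%R \notin P) + ((s.1.1 - s.2)%R \notin P)))).
  by apply: leq_sum => s _; rewrite /popular_triple; do 3!case: (_ \in P).
by rewrite !big_split /= sum_ab sum_bc sum_ac -!addnA leq_add2l mulSn mul2n addnn.
Qed.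

Lemma size_popular_triples : 8 * n ^ 3 <= 11 * size popular_triples.
Proof.
have := size_triples_leq_popular.
have : 11 * (n * unpopular_pairs A) <= n ^ 3.
  by rewrite mulnCA expnS leq_mul2l unpopular_pairs_leq orbT.
lia.
Qed.

Lemma size_gaps_image :
  size (undup (map gaps popular_triples)) <= \sum_(x <- P) deltaA P x.
Proof.
pose pairs_with_popular_difference :=
  filter (fun pq => (pq.1 - pq.2)%R \in P) [seq (p, q) | p <- P, q <- P].
have -> : \sum_(x <- P) deltaA P x = size pairs_with_popular_difference.
  by rewrite sum_delta size_filter -sumn_count sumnE !big_map big_allpairs.
apply: uniq_leq_size => [|z]; first exact: undup_uniq.
rewrite mem_undup => /mapP [s]; rewrite mem_filter => /andP [/and3P [ab bc ac] _] ->.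
rewrite mem_filter allpairs_f // andbT /=.
by have -> : (s.1.1 - s.2 - (s.1.2 - s.2) = s.1.1 - s.1.2)%R by ring.
Qed.

Lemma E3_common_shifts :
  E3 A = \sum_(t <- diffset A) \sum_(s <- triples) \sum_(s' <- triples)
           (t == (s.1.1 - s'.1.1)%R) * (t == (s.1.2 - s'.1.2)%R) * (t == (s.2 - s'.2)%R).
Proof.
apply: eq_bigr => t _.
under [RHS]eq_bigr => s _ do
  rewrite (sum_triples_mul (fun v => t == (s.1.1 - v)%R) (fun v => t == (s.1.2 - v)%R)
                           (fun v => t == (s.2 - v)%R)).
pose row u := \sum_(v <- A) (t == (u - v)%R).
by rewrite (sum_triples_mul row row row) /deltaA /delta !expnS expn0 muln1 mulnA.
Qed.

Lemma gap_collisions_leq_E3 :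
  \sum_(s <- popular_triples) \sum_(s' <- popular_triples) (gaps s == gaps s') <= E3 A.
Proof.
apply: (@leq_trans (\sum_(s <- triples) \sum_(s' <- triples) (gaps s == gaps s'))).
  apply: leq_trans (leq_sum_filter _ _ _) _.
  by apply: leq_sum => s _; apply: leq_sum_filter.
rewrite E3_common_shifts [leqRHS]exchange_big.
under [leqRHS]eq_bigr do rewrite exchange_big.
rewrite big_seq [leqRHS]big_seq; apply: leq_sum => s /mem_triples [aA _ _].
rewrite big_seq [leqRHS]big_seq; apply: leq_sum => s' /mem_triples [a'A _ _].
case: eqP => // -[gap_ac gap_bc].
apply: leq_trans (leq_bigsum_seq _ (mem_diffset aA a'A)).
have -> : (s.1.2 - s'.1.2 = s.1.1 - s'.1.1)%R by lra.
have -> : (s.2 - s'.2 = s.1.1 - s'.1.1)%R by lra.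
by rewrite eqxx.
Qed.

End Triples.

Local Open Scope ring_scope.

Theorem lemma1p6 :
  exists C : R, 0 < C /\
  exists N : nat, forall A : {fset R}, (N <= #|` A|)%N ->
    (#|` A|%:R : R) ^+ 6 <=
      C * (E3 A)%:R * (\sum_(x <- popular A) deltaA (popular A) x)%N%:R.
Proof.
exists 2%:R; split; first by rewrite ltr0n.
exists 0%N => A _; rewrite -natrX -!natrM ler_nat.
set Y := popular_triples A; set S := (\sum_(x <- popular A) _)%N.
have many_triples : ((8 * #|` A| ^ 3) ^ 2 <= (11 * size Y) ^ 2)%N.
  by rewrite leq_sqr size_popular_triples.
have few_collisions : (size Y ^ 2 <= S * E3 A)%N.
  apply: leq_trans (sqr_size_leq_image_mul_collisions Y gaps) _.
  exact: leq_mul (size_gaps_image A) (gap_collisions_leq_E3 A).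
have -> : (#|` A| ^ 6 = (#|` A| ^ 3) ^ 2)%N by rewrite -expnM.
move: many_triples few_collisions; rewrite !expnMn; lia.
Qed.
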